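(* Let $\mathcal{A}$ be a probabilistic automaton. Its extended Markov monoid $\mathcal{G}_+$, equipped with (componentwise) concatenation and with the iteration operation $(\mathbf{u},\mathbf{u}_+)\mapsto(\mathbf{u}^\sharp,\mathbf{u}_+)$ on idempotent elements, is a stabilization monoid.
   Context: Fix a finite alphabet $A$ and a probabilistic automaton $\mathcal{A}=(Q,q_0,\Delta,F)$, $\Delta:Q\times A\to\mathcal{D}(Q)$. A limit-word is a map $\mathbf{u}:Q\times Q\to\{0,1\}$ such that every $s$ has some $t$ with $\mathbf{u}(s,t)=1$. Concatenation: $(\mathbf{u}\cdot\mathbf{v})(s,t)=1$ iff there is $q$ with $\mathbf{u}(s,q)=\mathbf{v}(q,t)=1$. $\mathbf{u}$ is idempotent if $\mathbf{u}\cdot\mathbf{u}=\mathbf{u}$; for idempotent $\mathbf{u}$, $s$ is $\mathbf{u}$-recurrent if for all $t$, $\mathbf{u}(s,t)=1\Rightarrow\mathbf{u}(t,s)=1$, and $\mathbf{u}^\sharp(s,t)=1$ iff $\mathbf{u}(s,t)=1$ and $t$ is $\mathbf{u}$-recurrent. For $a\in A$, $\mathbf{a}(s,t)=1$ iff $\Delta(s,a)(t)>0$; $\mathbf{1}$ is the identity. An extended limit-word is a pair $(\mathbf{u},\mathbf{u}_+)$ of limit-words with $\mathbf{u}(s,t)=1\Rightarrow\mathbf{u}_+(s,t)=1$ for all $s,t$. Concatenation of extended limit-words is componentwise; $(\mathbf{u},\mathbf{u}_+)$ is idempotent if both components are idempotent, and then $(\mathbf{u},\mathbf{u}_+)^\sharp=(\mathbf{u}^\sharp,\mathbf{u}_+)$.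 The extended Markov monoid is the smallest set of extended limit-words containing $\{(\mathbf{a},\mathbf{a})\mid a\in A\}\cup\{(\mathbf{1},\mathbf{1})\}$ and closed under concatenation and under iteration of idempotents. A stabilization monoid $(M,\cdot,\sharp)$ is a finite monoid $(M,\cdot)$ with an operation $\sharp:E(M)\to E(M)$, $E(M)$ the set of idempotents of $M$, such that: $(a\cdot b)^\sharp\cdot a=a\cdot(b\cdot a)^\sharp$ whenever $a\cdot b, b\cdot a\in E(M)$; $(e^\sharp)^\sharp=e^\sharp$ for $e\in E(M)$; and $e^\sharp\cdot e=e^\sharp$ for $e\in E(M)$. *)

From mathcomp Require Import all_boot all_order all_algebra.
Set Implicit Arguments. Unset Strict Implicit. Unset Printing Implicit Defensive.
Import Order.TTheory GRing.Theory Num.Theory.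
Local Open Scope ring_scope.

Definition is_distr (R : numDomainType) (Q : finType) (d : {ffun Q -> R}) : Prop :=
  (forall t, 0 <= d t) /\ \sum_(t : Q) d t = 1.

Definition is_pa (R : numDomainType) (A Q : finType)
  (Delta : Q -> A -> {ffun Q -> R}) : Prop :=
  forall s a, is_distr (Delta s a).

Definition bmat (Q : finType) := {ffun Q * Q -> bool}.

Definition is_limit_word (Q : finType) (u : bmat Q) : Prop :=
  forall s, exists t, u (s, t).

Definition bmul (Q : finType) (u v : bmat Q) : bmat Q :=
  [ffun st : Q * Q => [exists q, u (st.1, q) && v (q, st.2)]].

Definition bone (Q : finType) : bmat Q := [ffun st : Q * Q => st.1 == st.2].

Definition bidem (Q : finType) (u : bmat Q) : bool := bmul u u == u.

Definition brecurrent (Q : finType) (u : bmat Q) (s : Q) : bool :=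
  [forall t, u (s, t) ==> u (t, s)].

Definition bsharp (Q : finType) (u : bmat Q) : bmat Q :=
  [ffun st : Q * Q => u st && brecurrent u st.2].

Definition letter_mat (R : numDomainType) (A Q : finType)
  (Delta : Q -> A -> {ffun Q -> R}) (a : A) : bmat Q :=
  [ffun st : Q * Q => 0 < Delta st.1 a st.2].

Definition ext (Q : finType) := (bmat Q * bmat Q)%type.

Definition is_ext_limit_word (Q : finType) (x : ext Q) : Prop :=
  is_limit_word x.1 /\ is_limit_word x.2 /\ (forall s t, x.1 (s, t) -> x.2 (s, t)).

Definition emul (Q : finType) (x y : ext Q) : ext Q := (bmul x.1 y.1, bmul x.2 y.2).
Definition eone (Q : finType) : ext Q := (bone Q, bone Q).
Definition eidem (Q : finType) (x : ext Q) : bool := bidem x.1 && bidem x.2.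
Definition esharp (Q : finType) (x : ext Q) : ext Q := (bsharp x.1, x.2).

Inductive ext_markov (R : numDomainType) (A Q : finType)
  (Delta : Q -> A -> {ffun Q -> R}) : ext Q -> Prop :=
| em_letter a : ext_markov Delta (letter_mat Delta a, letter_mat Delta a)
| em_one : ext_markov Delta (eone Q)
| em_mul x y : ext_markov Delta x -> ext_markov Delta y -> ext_markov Delta (emul x y)
| em_sharp x : ext_markov Delta x -> eidem x -> ext_markov Delta (esharp x).

(* Finiteness of M is automatic since T is a finType. *)
Definition stab_monoid (T : finType) (M : T -> Prop) (mul : T -> T -> T)
  (one : T) (sharp : T -> T) : Prop :=
  let idem e := mul e e = e in
     M one
  /\ (forall a b, M a -> M b -> M (mul a b))
  /\ (forall a b c, M a -> M b -> M c -> mul a (mul b c) = mul (mul a b) c)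
  /\ (forall a, M a -> mul one a = a /\ mul a one = a)
  /\ (forall e, M e -> idem e -> M (sharp e) /\ idem (sharp e))
  /\ (forall a b, M a -> M b -> idem (mul a b) -> idem (mul b a) ->
          mul (sharp (mul a b)) a = mul a (sharp (mul b a)))
  /\ (forall e, M e -> idem e -> sharp (sharp e) = sharp e)
  /\ (forall e, M e -> idem e -> mul (sharp e) e = sharp e).

From mathcomp Require Import all_boot all_order all_algebra.
Set Implicit Arguments. Unset Strict Implicit. Unset Printing Implicit Defensive.
Import GRing.Theory Num.Theory.
Local Open Scope ring_scope.

(* Everything is componentwise, and iteration leaves the second component
   alone, so the monoid laws reduce to associativity and unitality of the
   product of boolean matrices, and the stabilization axioms to properties of
   [bsharp] on idempotent limit-words [u], i.e. transitive relations in which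
   every state has a successor.  Every state [s] has a [u]-recurrent
   [u]-successor (a successor of a successor with the fewest successors), so
   [u^#] is again a limit-word; from this [u^# u = u^#] and the idempotence of
   [u^#] follow.  For [(uv)^# u = u (vu)^#] the point is that a [u]-edge
   leaving a [uv]-recurrent state ends in a [vu]-recurrent state, and
   symmetrically a [v]-edge leaving a [vu]-recurrent state ends in a
   [uv]-recurrent one. *)

Section BoolMatrices.

Variable Q : finType.
Implicit Types u v w : bmat Q.

Lemma bmulP u v s t : reflect (exists q, u (s, q) /\ v (q, t)) (bmul u v (s, t)).
Proof.
rewrite ffunE; apply: (iffP existsP) => [[q /andP [hsq hqt]]|[q [hsq hqt]]].
- by exists q.
- by exists q; apply/andP.
Qed.

Lemma bmulA u v w : bmul u (bmul v w) = bmul (bmul u v) w.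
Proof.
apply/ffunP => -[s t]; apply/bmulP/bmulP.
- case=> q [hsq /bmulP [r [hqr hrt]]]; exists r; split => //.
  by apply/bmulP; exists q.
- case=> q [/bmulP [r [hsr hrq]] hqt]; exists r; split => //.
  by apply/bmulP; exists q.
Qed.

Lemma bmul1m u : bmul (bone Q) u = u.
Proof.
apply/ffunP => -[s t]; apply/bmulP/idP => [[q []]|hst].
- by rewrite ffunE /= => /eqP ->.
- by exists s; rewrite ffunE /= eqxx.
Qed.

Lemma bmulm1 u : bmul u (bone Q) = u.
Proof.
apply/ffunP => -[s t]; apply/bmulP/idP => [[q []]|hst].
- by rewrite ffunE /= => hsq /eqP <-.
- by exists t; rewrite ffunE /= eqxx.
Qed.

Lemma limit_word_bmul u v :
  is_limit_word u -> is_limit_word v -> is_limit_word (bmul u v).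
Proof.
move=> limu limv s; have [q hsq] := limu s; have [t hqt] := limv q.
by exists t; apply/bmulP; exists q.
Qed.

Lemma bidem_trans u s q t : bidem u -> u (s, q) -> u (q, t) -> u (s, t).
Proof. by move=> idu hsq hqt; rewrite -(eqP idu); apply/bmulP; exists q. Qed.

Lemma brecurrentP u s :
  reflect (forall t, u (s, t) -> u (t, s)) (brecurrent u s).
Proof. by apply: (iffP forallP) => h t; [exact/implyP/h | apply/implyP/h]. Qed.

Lemma bsharpE u s t : bsharp u (s, t) = u (s, t) && brecurrent u t.
Proof. by rewrite ffunE. Qed.

Section IdempotentLimitWord.

Variable u : bmat Q.
Hypotheses (limu : is_limit_word u) (idu : bidem u).

Lemma brecurrent_refl t : brecurrent u t -> u (t, t).
Proof.
move=> /brecurrentP rect; have [q htq] := limu t.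
exact: bidem_trans idu htq (rect q htq).
Qed.

Lemma exists_brecurrent s : exists t, u (s, t) && brecurrent u t.
Proof.
pose succ q := [set x | u (q, x)].
have [t0 hst0] := limu s.
case: (@arg_minnP _ t0 (fun t => u (s, t)) (fun t => #|succ t|) hst0) => m hsm mmin.
have succ_sub q x : u (q, x) -> succ x \subset succ q.
  by move=> hqx; apply/subsetP => y; rewrite !inE; apply: bidem_trans idu hqx.
have [t hmt] := limu m.
exists t; rewrite (bidem_trans idu hsm hmt); apply/brecurrentP => x htx.
have hmx := bidem_trans idu hmt htx.
have: succ x = succ m.
  by apply/eqP; rewrite eqEcard succ_sub ?mmin //; apply: bidem_trans idu hsm hmx.
by move/setP/(_ t); rewrite !inE hmt.
Qed.

Lemma limit_word_bsharp : is_limit_word (bsharp u).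
Proof. by move=> s; have [t hst] := exists_brecurrent s; exists t; rewrite bsharpE. Qed.

Lemma bsharp_mul : bmul (bsharp u) u = bsharp u.
Proof.
apply/ffunP => -[s t]; rewrite bsharpE; apply/bmulP/andP.
- case=> q []; rewrite bsharpE => /andP [hsq /brecurrentP recq] hqt.
  split; first exact: bidem_trans idu hsq hqt.
  apply/brecurrentP => x htx.
  exact: bidem_trans idu (recq x (bidem_trans idu hqt htx)) hqt.
- by case=> hst rect; exists t; rewrite bsharpE hst rect brecurrent_refl.
Qed.

Lemma bsharp_idem : bidem (bsharp u).
Proof.
apply/eqP/ffunP => -[s t]; rewrite bsharpE; apply/bmulP/andP.
- case=> q []; rewrite !bsharpE => /andP [hsq _] /andP [hqt rect].
  by rewrite (bidem_trans idu hsq hqt).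
- by case=> hst rect; exists t; rewrite !bsharpE hst rect brecurrent_refl.
Qed.

End IdempotentLimitWord.

Lemma bsharpK u : bsharp (bsharp u) = bsharp u.
Proof.
apply/ffunP => -[s t]; rewrite !bsharpE.
case rect: (brecurrent u t); rewrite ?andbF // andbT; apply: andb_idr => _.
apply/brecurrentP => x; rewrite !bsharpE => /andP [htx _].
by rewrite (brecurrentP _ _ rect x htx).
Qed.

Section Conjugate.

Variables u v : bmat Q.
Hypotheses (iduv : bidem (bmul u v)) (idvu : bidem (bmul v u)).

Lemma brecurrent_bmul_transfer q t : is_limit_word v ->
  u (q, t) -> brecurrent (bmul u v) q -> brecurrent (bmul v u) t.
Proof.
move=> limv hqt /brecurrentP recq; apply/brecurrentP => x /bmulP [m [htm hmx]].
have [w hxw] := limv x.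
have hqm : bmul u v (q, m) by apply/bmulP; exists t.
have hmw : bmul u v (m, w) by apply/bmulP; exists x.
have /bmulP [r [hwr hrq]] := recq w (bidem_trans iduv hqm hmw).
apply: (bidem_trans (q := r) idvu); apply/bmulP; first by exists w.
by exists q.
Qed.

End Conjugate.

Lemma bsharp_conj u v : is_limit_word u -> is_limit_word v ->
  bidem (bmul u v) -> bidem (bmul v u) ->
  bmul (bsharp (bmul u v)) u = bmul u (bsharp (bmul v u)).
Proof.
move=> limu limv iduv idvu; have limvu := limit_word_bmul limv limu.
apply/ffunP => -[s t]; apply/bmulP/bmulP.
- case=> q []; rewrite bsharpE => /andP [hsq recq] hqt.
  have: bmul (bmul u v) u (s, t) by apply/bmulP; exists q.
  rewrite -bmulA => /bmulP [p [hsp hpt]].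
  exists p; split => //.
  by rewrite bsharpE hpt (brecurrent_bmul_transfer iduv idvu limv hqt recq).
- case=> p [hsp]; rewrite bsharpE => /andP [hpt rect].
  have /bmulP [m [htm hmt]] := brecurrent_refl limvu idvu rect.
  have: bmul u (bmul v u) (s, t) by apply/bmulP; exists p.
  rewrite bmulA => /bmulP [z [hsz hzt]].
  exists m; split => //.
  rewrite bsharpE (brecurrent_bmul_transfer idvu iduv limu htm rect) andbT.
  by apply: (bidem_trans iduv hsz); apply/bmulP; exists t.
Qed.

End BoolMatrices.

Lemma is_distr_support (R : numDomainType) (Q : finType) (d : {ffun Q -> R}) :
  is_distr d -> exists t, 0 < d t.
Proof.
case=> d_ge0 d_sum; have [t /andP [_ dt_gt0]] : exists t, true && (0 < d t).
  apply: psumr_neq0P => [t _|]; first exact: d_ge0.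
  by rewrite d_sum; apply/eqP; rewrite oner_eq0.
by exists t.
Qed.

Lemma limit_word_letter (R : numDomainType) (A Q : finType)
    (Delta : Q -> A -> {ffun Q -> R}) a :
  is_pa Delta -> is_limit_word (letter_mat Delta a).
Proof.
by move=> paD s; have [t hst] := is_distr_support (paD s a); exists t; rewrite ffunE.
Qed.

Lemma ext_markov_limit_word (R : numDomainType) (A Q : finType)
    (Delta : Q -> A -> {ffun Q -> R}) x :
  is_pa Delta -> ext_markov Delta x -> is_limit_word x.1.
Proof.
move=> paD; elim=> [a | | y z _ limy _ limz | y _ limy /andP [idy _]] /=.
- exact: limit_word_letter.
- by move=> s; exists s; rewrite ffunE /=.
- exact: limit_word_bmul limy limz.
- exact: limit_word_bsharp limy idy.
Qed.

Section ExtendedLimitWords.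

Variable Q : finType.
Implicit Types x y z : ext Q.

Lemma eidemP x : reflect (emul x x = x) (eidem x).
Proof.
case: x => u w; rewrite /eidem /emul /=.
apply: (iffP andP) => [[/eqP -> /eqP ->] | [idu idw]] //.
by rewrite /bidem idu idw !eqxx.
Qed.

Lemma emulA x y z : emul x (emul y z) = emul (emul x y) z.
Proof. by rewrite /emul /= !bmulA. Qed.

Lemma emul1x x : emul (eone Q) x = x.
Proof. by case: x => u w; rewrite /emul /= !bmul1m. Qed.

Lemma emulx1 x : emul x (eone Q) = x.
Proof. by case: x => u w; rewrite /emul /= !bmulm1. Qed.

Lemma esharpK x : esharp (esharp x) = esharp x.
Proof. by rewrite /esharp /= bsharpK. Qed.

Section IdempotentExtended.

Variable x : ext Q.
Hypotheses (limx : is_limit_word x.1) (idx : emul x x = x).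

Let idx1 : bidem x.1.
Proof. by case/eidemP/andP: idx. Qed.

Lemma esharp_idem : emul (esharp x) (esharp x) = esharp x.
Proof.
case: x idx limx idx1 => u w [_ idw] limu idu.
by rewrite /emul /esharp /= (eqP (bsharp_idem limu idu)) idw.
Qed.

Lemma esharp_mul : emul (esharp x) x = esharp x.
Proof.
case: x idx limx idx1 => u w [_ idw] limu idu.
by rewrite /emul /esharp /= bsharp_mul // idw.
Qed.

End IdempotentExtended.

Lemma esharp_conj x y : is_limit_word x.1 -> is_limit_word y.1 ->
  emul (emul x y) (emul x y) = emul x y -> emul (emul y x) (emul y x) = emul y x ->
  emul (esharp (emul x y)) x = emul x (esharp (emul y x)).
Proof.
case: x y => [u1 u2] [v1 v2] limu limv /eidemP/andP [iduv _] /eidemP/andP [idvu _].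
by rewrite /emul /esharp /= bsharp_conj // bmulA.
Qed.

End ExtendedLimitWords.

Theorem lemma3p12 (R : realFieldType) (A Q : finType) (q0 : Q)
  (Delta : Q -> A -> {ffun Q -> R}) (F : {set Q}) :
  is_pa Delta ->
  stab_monoid (ext_markov Delta) (@emul Q) (eone Q) (@esharp Q).
Proof.
move=> paD; have lim := ext_markov_limit_word paD.
split; first exact: em_one.
split; first exact: em_mul.
split; first by move=> *; apply: emulA.
split; first by move=> *; rewrite emul1x emulx1.
split.
  move=> e Me ide; split; last exact: esharp_idem (lim _ Me) ide.
  by apply: em_sharp => //; apply/eidemP.
split; first by move=> a b Ma Mb; apply: esharp_conj (lim _ Ma) (lim _ Mb).
split; first by move=> e _ _; apply: esharpK.
by move=> e Me; apply: esharp_mul (lim _ Me).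
Qed.
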